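(* Let $A$ be a finite alphabet, $w_1,\ldots,w_k\in A^*$, and $N=\max(|w_1|,\ldots,|w_k|)\ge1$. The following are equivalent: (1) $\mathrm{WMIX}(w_1,\ldots,w_k)$ is infinite. (2) There exists a trace $T\subseteq\mathcal P(\mathcal D_N)\cup\mathcal C(\mathcal D_N)$ of some walk in $\mathcal D_N$, written $T=\{\pi\}\cup\{\gamma_1,\ldots,\gamma_m\}$ with $\pi$ its unique path and $\gamma_1,\ldots,\gamma_m$ its pairwise distinct cycles, satisfying both (balance condition) there exist integers $x_1,\ldots,x_m\ge1$ such that \[\mathrm{diff}\Big(\mathrm{occ}(\mathrm{src}(\pi);w_1,\ldots,w_k)+\mathrm{occ}(\pi;w_1,\ldots,w_k)+\sum_{i=1}^m x_i\cdot\mathrm{occ}(\gamma_i;w_1,\ldots,w_k)\Big)=0,\] where $\mathrm{src}(\pi)\in A^N$ is regarded as a word; and (pumping condition) there exist $y_1,\ldots,y_m\in\mathbb N$, not all zero, such that \[\mathrm{diff}\Big(\sum_{i=1}^m y_i\cdot\mathrm{occ}(\gamma_i;w_1,\ldots,w_k)\Big)=0.\]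
   Context: For $u,w\in A^*$, $|w|_u$ is the number of pairs $(x,y)\in A^*\times A^*$ with $xuy=w$. $\mathrm{WMIX}(w_1,\ldots,w_k)=\{w\in A^*\mid|w|_{w_1}=\cdots=|w|_{w_k}\}$. For $\bm v=(c_1,\ldots,c_k)\in\mathbb N^k$, $\mathrm{diff}(\bm v)=\sum_{i=1}^k(\max(c_1,\ldots,c_k)-c_i)$ (so $\mathrm{diff}(\bm v)=0$ iff all coordinates are equal). $\mathrm{suff}(w)$ is the set of suffixes of $w$. A (directed) graph is $\mathcal G=(V,E)$ with $E\subseteq V\times V$. A walk is a sequence $\omega=(v_1,\ldots,v_n)\in V^n$, $n\ge1$, with $(v_i,v_{i+1})\in E$ for all $1\le i<n$; its length is $|\omega|=n-1$, its source $\mathrm{src}(\omega)$ is $v_1$ and its target is $v_n$. $V(\omega)=\{v_1,\ldots,v_n\}$. If the target of $\omega_1=(v_1,\ldots,v_m)$ equals the source of $\omega_2=(v'_1,\ldots,v'_n)$, then $\omega_1\odot\omega_2=(v_1,\ldots,v_m,v'_2,\ldots,v'_n)$. A loop is a non-empty walk whose source equals its target. A path is a walk whose vertices are pairwise distinct (empty walks are paths). A cycle is a loop $(v,v_1,\ldots,v_n,v)$ such that $(v,v_1,\ldots,v_n)$ is a path. $\mathcal W(\mathcal G),\mathcal P(\mathcal G),\mathcal C(\mathcal G)$ denote the sets of walks, paths and cycles. For a sequence of cycles $\Gamma=(\gamma_1,\ldots,\gamma_n)$: $|\Gamma|_\gamma=\#\{i\mid\gamma_i=\gamma\}$, $\Gamma.\gamma=(\gamma_1,\ldots,\gamma_n,\gamma)$;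 $\emptyset$ is the empty sequence. Decomposition $\mathrm{dec}_{\mathcal G}:\mathcal W(\mathcal G)\to\mathcal P(\mathcal G)\times\mathcal C(\mathcal G)^*$, by induction on length: $\mathrm{dec}_{\mathcal G}((v))=((v),\emptyset)$; for a walk $\omega$ with target $v$ and an edge $(v,v')$, let $(\pi,\Gamma)=\mathrm{dec}_{\mathcal G}(\omega)$ (the target of $\pi$ is $v$); if $v'\notin V(\pi)$ then $\mathrm{dec}_{\mathcal G}(\omega\odot(v,v'))=(\pi\odot(v,v'),\Gamma)$; otherwise, writing $\pi=(v_1,\ldots,v_{j-1},v',v_{j+1},\ldots,v)$, $\mathrm{dec}_{\mathcal G}(\omega\odot(v,v'))=((v_1,\ldots,v_{j-1},v'),\ \Gamma.(v',v_{j+1},\ldots,v,v'))$. Multi-trace: for $\omega\in\mathcal W(\mathcal G)$ with $(\pi_\omega,\Gamma)=\mathrm{dec}_{\mathcal G}(\omega)$, $\mathrm{mtr}(\omega):\mathcal P(\mathcal G)\cup\mathcal C(\mathcal G)\to\mathbb N$ is given by $\mathrm{mtr}(\omega)(\pi)=1$ if $\pi=\pi_\omega$ and $0$ for other paths $\pi$, and $\mathrm{mtr}(\omega)(\gamma)=|\Gamma|_\gamma$ for cycles $\gamma$. The trace of $\omega$ is $\mathrm{tr}(\omega)=\{x\in\mathcal P(\mathcal G)\cup\mathcal C(\mathcal G)\mid\mathrm{mtr}(\omega)(x)\neq0\}$; it contains exactly one path. The $N$-dimensional de Bruijn graph $\mathcal D_N=(A^N,E)$ has vertex set $A^N$ and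 edge set $E=\{(av,vb)\mid a,b\in A,\ v\in A^{N-1}\}$. $\mathrm{suf}(w;w_1,\ldots,w_k)=(c_1,\ldots,c_k)\in\mathbb N^k$ with $c_i=1$ if $w_i\in\mathrm{suff}(w)$ and $0$ otherwise; $\mathrm{occ}(w;w_1,\ldots,w_k)=(|w|_{w_1},\ldots,|w|_{w_k})$ for a word $w$; for a walk $\omega=(v_0,v_1,\ldots,v_n)$ in $\mathcal D_N$, $\mathrm{occ}(\omega;w_1,\ldots,w_k)=\sum_{i=1}^n\mathrm{suf}(v_i;w_1,\ldots,w_k)$ (zero vector if $n=0$). *)

From mathcomp Require Import all_boot.
Set Implicit Arguments. Unset Strict Implicit. Unset Printing Implicit Defensive.

Section Defs.
Variable A : finType.

(* |w|_u : number of pairs (x,y) with x ++ u ++ y = w; indexed by i = |x|. *)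
Definition nocc (u w : seq A) : nat :=
  count (fun i => take (size u) (drop i w) == u) (iota 0 (size w).+1).

Definition in_wmix (ws : seq (seq A)) (w : seq A) : Prop :=
  forall u v, u \in ws -> v \in ws -> nocc u w = nocc v w.

(* Vectors in N^k are represented as seq nat of length k. *)
Definition vadd (v1 v2 : seq nat) : seq nat := [seq p.1 + p.2 | p <- zip v1 v2].
Definition vscale (x : nat) (v : seq nat) : seq nat := [seq x * c | c <- v].
Definition vsum (k : nat) (vs : seq (seq nat)) : seq nat := foldr vadd (nseq k 0) vs.

Definition vdiff (v : seq nat) : nat := \sum_(c <- v) ((\max_(d <- v) d) - c).

Definition occ_word (w : seq A) (ws : seq (seq A)) : seq nat := [seq nocc u w | u <- ws].

Definition suf (v : seq A) (ws : seq (seq A)) : seq nat :=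
  [seq nat_of_bool (suffix u v) | u <- ws].

Definition occ_walk (om : seq (seq A)) (ws : seq (seq A)) : seq nat :=
  vsum (size ws) [seq suf v ws | v <- behead om].

(* N-dimensional de Bruijn graph: vertices are words of length N,
   edges (a v, v b). *)
Definition db_vertex (N : nat) (u : seq A) : bool := size u == N.
Definition db_edge (N : nat) (u v : seq A) : bool :=
  [&& size u == N, size v == N & behead u == take N.-1 v].

Definition db_walk (N : nat) (om : seq (seq A)) : bool :=
  match om with
  | [::] => false
  | v :: om' => db_vertex N v && path (db_edge N) v om'
  end.

Definition dec_step (pg : seq (seq A) * seq (seq (seq A))) (v' : seq A) :=
  let: (pi, G) := pg in
  if v' \in pi then
    let j := index v' pi in (take j.+1 pi, rcons G (rcons (drop j pi) v'))
  else (rcons pi v', G).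

Definition dec (om : seq (seq A)) : seq (seq A) * seq (seq (seq A)) :=
  match om with
  | [::] => ([::], [::])
  | v :: om' => foldl dec_step ([:: v], [::]) om'
  end.

End Defs.

(* A walk of the de Bruijn graph D_N spells a word whose pattern counts are those
   of its first vertex plus the numbers of later vertices having each pattern as a
   suffix.  Decomposing the walk into a simple path and simple cycles makes these
   counts linear in the cycle multiplicities.  If the balance and pumping
   conditions hold, every cycle can be spliced x_i + t y_i times into the path,
   which yields words of WMIX of unbounded length.  Conversely, infinitely many
   words of WMIX give walks whose decompositions lie in a finite universe, so by
   Dickson's lemma two of them have the same path and cycles, the multiplicities
   of the shorter one bounded by those of the longer: the former multiplicities
   witness the balance condition and the differences the pumping condition. *)

From mathcomp Require Import all_boot zify.
From Stdlib Require Import Classical Wf_nat IndefiniteDescription.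
Set Implicit Arguments. Unset Strict Implicit. Unset Printing Implicit Defensive.

Lemma ex_minimal_nat (P : nat -> Prop) : (exists n, P n) ->
  exists n, P n /\ forall m, P m -> n <= m.
Proof.
move=> exP; have [n [[Pn minn] _]] :=
  @dec_inh_nat_subset_has_unique_least_element P (fun n => classic (P n)) exP.
by exists n; split=> // m /minn /leP.
Qed.

Lemma nondecreasing_subseq (a : nat -> nat) :
  exists g : nat -> nat, (forall n, g n < g n.+1) /\ forall n, a (g n) <= a (g n.+1).
Proof.
have /functional_choice [nxt nxtP] :
    forall p, exists q, p < q /\ forall q', p < q' -> a q <= a q'.
  move=> p.
  have [v [[q [ltpq <-]] minv]] :=
    ex_minimal_nat (ex_intro (fun v => exists q, p < q /\ a q = v) _
                              (ex_intro _ p.+1 (conj (ltnSn p) erefl))).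
  by exists q; split=> // q' ltpq'; apply: minv; exists q'.
exists (fun n => iter n.+2 nxt 0); split=> n; first exact: (nxtP _).1.
apply: (nxtP _).2; exact: ltn_trans (nxtP _).1 (nxtP _).1.
Qed.

Lemma dickson_subseq (fs : seq (nat -> nat)) :
  exists g : nat -> nat, (forall n, g n < g n.+1) /\
    forall n, all (fun f => f (g n) <= f (g n.+1)) fs.
Proof.
elim: fs => [|f fs [g [incr_g mono_g]]]; first by exists id.
have [h [incr_h mono_fgh]] := nondecreasing_subseq (f \o g).
have mono_fs m n : m <= n -> all (fun f => f (g m) <= f (g n)) fs.
  move=> le_mn; apply/(all_nthP id) => t lt_t.
  have step k : nth id fs t (g k) <= nth id fs t (g k.+1).
    by have /(all_nthP id) := mono_g k; apply.
  exact: (homo_leq leqnn (@leq_trans) step le_mn).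
exists (g \o h); split=> [n|n /=]; first exact: (homo_ltn (@ltn_trans) incr_g).
by rewrite mono_fgh mono_fs // ltnW.
Qed.

Lemma dickson (fs : seq (nat -> nat)) :
  exists i j, i < j /\ all (fun f => f i <= f j) fs.
Proof. by have [g [incr_g mono_g]] := dickson_subseq fs; exists (g 0), (g 1). Qed.

Lemma dickson_multisets (T : eqType) (U : seq T) (D : nat -> T * seq T) :
  (forall k, (D k).1 \in U /\ {subset (D k).2 <= U}) ->
  exists i j, [/\ i < j, (D j).1 = (D i).1, {subset (D j).2 <= (D i).2} &
    forall o, count_mem o (D i).2 <= count_mem o (D j).2].
Proof.
move=> DU.
have [i [j [lt_ij]]] := dickson
  ([seq (fun k => nat_of_bool ((D k).1 == o)) | o <- U] ++
   [seq (fun k => nat_of_bool (o \notin (D k).2)) | o <- U] ++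
   [seq (fun k => count_mem o (D k).2) | o <- U]).
rewrite !all_cat !all_map => /and3P [/allP pi_mono /allP G_mono /allP count_mono].
have [Di_U _] := DU i; have [_ Dj_U] := DU j.
exists i, j; split=> //.
- by have := pi_mono _ Di_U; rewrite /= eqxx; case: eqP.
- by move=> o o_Dj; have := G_mono _ (Dj_U _ o_Dj); rewrite /= o_Dj; case: (o \in _).
move=> o; have [o_U|o_U] := boolP (o \in U); first exact: count_mono.
have [_ Di_sub] := DU i.
by have /count_memPn -> : o \notin (D i).2 by apply: contra o_U => /Di_sub.
Qed.

Fixpoint bounded_seqs (T : Type) (V : seq T) n : seq (seq T) :=
  if n is n'.+1 then [::] :: [seq x :: s | x <- V, s <- bounded_seqs V n'] else [:: [::]].

Lemma mem_bounded_seqs (T : eqType) (V : seq T) n s :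
  {subset s <= V} -> size s <= n -> s \in bounded_seqs V n.
Proof.
elim: n s => [|n IH] [|x s] //= sV le_sn.
rewrite inE allpairs_f ?orbT ?sV ?mem_head ?IH // => y ys.
by rewrite sV // inE ys orbT.
Qed.

Lemma mem_bounded_words (T : finType) n (w : seq T) :
  size w <= n -> w \in bounded_seqs (enum T) n.
Proof. by apply: mem_bounded_seqs => x _; rewrite mem_enum. Qed.

Lemma infinite_wordsP (T : finType) (P : seq T -> Prop) :
  ~ (exists L : seq (seq T), forall w, P w -> w \in L) <->
  forall n, exists w, P w /\ n < size w.
Proof.
split=> [infP n | long [L PL]].
  apply: NNPP => nolong; apply: infP.
  exists (bounded_seqs (enum T) n) => w Pw; rewrite mem_bounded_words // leqNgt.
  by apply/negP => ltnw; apply: nolong; exists w.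
have [w [Pw]] := long (\max_(w <- L) size w).
by rewrite ltnNge leq_bigmax_seq ?PL.
Qed.

Lemma increasing_words (T : Type) (P : seq T -> Prop) n :
  (forall m, exists w, P w /\ m < size w) ->
  exists s : nat -> seq T,
    forall k, [/\ P (s k), n < size (s k) & size (s k) < size (s k.+1)].
Proof.
move=> /functional_choice [F FP].
pose s k := iter k (F \o size) (F n).
have long k : n < size (s k).
  by elim: k => [|k IHk]; [exact: (FP n).2 | exact: ltn_trans IHk (FP _).2].
by exists s => k; split; [case: k => [|k]; apply: (FP _).1 | | apply: (FP _).2].
Qed.

Lemma sum_count_undup (T : eqType) (s : seq T) (F : T -> nat) :
  \sum_(x <- s) F x = \sum_(x <- undup s) count_mem x s * F x.
Proof.
rewrite -big_undup_iterop_count; apply: eq_bigr => x _.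
by rewrite Monoid.iteropE iter_addn_0 mulnC.
Qed.

Lemma big_zip_index (T : eqType) (cs : seq nat) (gs : seq T) (F : T -> nat) :
  uniq gs -> size cs = size gs ->
  \sum_(q <- zip cs gs) q.1 * F q.2 = \sum_(g <- gs) nth 0 cs (index g gs) * F g.
Proof.
elim: gs cs => [|g gs IH] [|c cs] //=; first by rewrite !big_nil.
move=> /andP [g_gs uniq_gs] [size_cs].
rewrite !big_cons /= eqxx IH //; congr (_ + _); apply: eq_big_seq => g' g'_gs /=.
by case: eqP => // eq_g; move: g_gs; rewrite eq_g g'_gs.
Qed.

Lemma big_zip_map (T : Type) (c : T -> nat) (gs : seq T) (F : T -> nat) :
  \sum_(q <- zip [seq c g | g <- gs] gs) q.1 * F q.2 = \sum_(g <- gs) c g * F g.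
Proof. by elim: gs => [|g gs IH]; rewrite ?big_nil //= !big_cons IH. Qed.

Lemma size_vadd v1 v2 : size (vadd v1 v2) = minn (size v1) (size v2).
Proof. by rewrite size_map size_zip. Qed.

Lemma nth_vadd v1 v2 t : t < size v1 -> t < size v2 ->
  nth 0 (vadd v1 v2) t = nth 0 v1 t + nth 0 v2 t.
Proof.
move=> lt1 lt2; rewrite (nth_map (0, 0)) ?size_zip ?leq_min ?lt1 //.
by rewrite nth_zip_cond size_zip leq_min lt1 lt2.
Qed.

Lemma size_vscale x v : size (vscale x v) = size v.
Proof. exact: size_map. Qed.

Lemma nth_vscale x v t : nth 0 (vscale x v) t = x * nth 0 v t.
Proof.
case: (ltnP t (size v)) => ht; first by rewrite (nth_map 0).
by rewrite !nth_default ?muln0 ?size_map.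
Qed.

Lemma size_vsum k vs : all (fun v => size v == k) vs -> size (vsum k vs) = k.
Proof.
elim: vs => [|v vs IH] /=; first by rewrite size_nseq.
by case/andP=> /eqP sv /IH svs; rewrite size_vadd svs sv minnn.
Qed.

Lemma nth_vsum k vs t : all (fun v => size v == k) vs -> t < k ->
  nth 0 (vsum k vs) t = \sum_(v <- vs) nth 0 v t.
Proof.
move=> + ltk; elim: vs => [|v vs IH] /=; first by rewrite big_nil nth_nseq ltk.
case/andP=> /eqP sv svs.
by rewrite big_cons nth_vadd ?IH ?sv ?size_vsum.
Qed.

Lemma vdiff0P v : reflect (forall t t', t < size v -> t' < size v -> nth 0 v t = nth 0 v t')
  (vdiff v == 0).
Proof.
rewrite /vdiff sum_nat_seq_eq0; set M := \max_(d <- v) d.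
apply: (iffP allP) => [eqM t t' lt_t lt_t' | eqv c cv /=].
  have {}eqM c : c \in v -> c = M.
    by move=> cv; apply/eqP; rewrite eqn_leq leq_bigmax_seq //= -subn_eq0; exact: eqM.
  by rewrite (eqM _ (mem_nth 0 lt_t)) (eqM _ (mem_nth 0 lt_t')).
rewrite subn_eq0; apply/bigmax_leqP_seq => d dv _.
have [[i lt_i <-] [j lt_j <-]] := (nthP 0 cv, nthP 0 dv).
by rewrite (eqv j i).
Qed.

Section Occurrences.
Variable A : finType.
Implicit Types u w s : seq A.

Lemma nocc_cons u a w : nocc u (a :: w) = prefix u (a :: w) + nocc u w.
Proof.
rewrite /nocc prefixE [size _]/= -[iota 0 _]/(0 :: iota (1 + 0) (size w).+1) iotaDl.
by rewrite [count _ (_ :: _)]/= count_map.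
Qed.

Lemma nocc_nil u : nocc u [::] = (u == [::]).
Proof. by rewrite /nocc /= addn0; case: u. Qed.

Lemma prefix_rcons_eq u s b : prefix u (rcons s b) = prefix u s || (u == rcons s b).
Proof. by elim: s u => [|x s IH] [|y u] //=; rewrite IH eqseq_cons andb_orr. Qed.

Lemma suffix_cons_eq u a s : suffix u (a :: s) = suffix u s || (u == a :: s).
Proof. by rewrite /suffix rev_cons prefix_rcons_eq -rev_cons (can_eq revK). Qed.

Lemma nocc_rcons u w b : nocc u (rcons w b) = nocc u w + suffix u (rcons w b).
Proof.
elim: w => [|a w IH].
  rewrite nocc_cons !nocc_nil addnC; congr (_ + _); case: u => [|y [|z u]] //.
  have -> : prefix [:: y, z & u] [:: b] = false by apply/negP => /size_prefix.
  by have -> : suffix [:: y, z & u] [:: b] = false by apply/negP => /size_suffix.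
rewrite rcons_cons nocc_cons -rcons_cons prefix_rcons_eq IH nocc_cons.
rewrite suffix_cons_eq -rcons_cons.
have [->|_] := eqVneq u (rcons (a :: w) b); last by rewrite !orbF addnA.
have -> : prefix (rcons (a :: w) b) (a :: w) = false.
  by apply/negP => /size_prefix; rewrite size_rcons ltnn.
have -> : suffix (rcons (a :: w) b) (rcons w b) = false.
  by apply/negP => /size_suffix; rewrite !size_rcons ltnn.
by rewrite addnCA.
Qed.

Lemma suffix_suffix_size u y s : suffix y s -> size u <= size y ->
  suffix u s = suffix u y.
Proof.
move=> /suffixP [s' ->] le_uy; rewrite !suffixE size_cat drop_cat.
by rewrite -addnBA // ltnNge leq_addr /= addKn.
Qed.

End Occurrences.

Section WalkWords.
Variables (A : finType) (N : nat).
Hypothesis N_gt0 : 0 < N.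
Local Notation e := (@db_edge A N).
Implicit Types (u w x y : seq A) (p : seq (seq A)).

(* [drop N.-1 v] is the last letter of the vertex [v]. *)
Definition walk_word x p := x ++ flatten [seq drop N.-1 v | v <- p].

Lemma db_edgeE x y : e x y -> exists c, y = rcons (behead x) c /\ drop N.-1 y = [:: c].
Proof.
case/and3P=> _ /eqP size_y /eqP xy.
have : size (drop N.-1 y) = 1.
  by rewrite size_drop size_y; case: (N) N_gt0 => // n _; rewrite subSn // subnn.
case E: (drop N.-1 y) => [|c [|]] // _; exists c; split=> //.
by rewrite -cats1 xy -E cat_take_drop.
Qed.

Lemma size_last_path x p : path e x p -> size x = N -> size (last x p) = N.
Proof.
elim: p x => [|y p IH] x //= /andP [/and3P [_ /eqP size_y _] xp] _.
exact: IH.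
Qed.

Lemma walk_word_rcons x p y c : drop N.-1 y = [:: c] ->
  walk_word x (rcons p y) = rcons (walk_word x p) c.
Proof. by move=> yc; rewrite /walk_word map_rcons flatten_rcons yc catA cats1. Qed.

Lemma suffix_last_walk_word x p : path e x p -> size x = N ->
  suffix (last x p) (walk_word x p).
Proof.
move=> + size_x; elim/last_ind: p => [|p y IH]; first by rewrite /walk_word cats0 suffix_refl.
rewrite rcons_path last_rcons => /andP [xp /db_edgeE [c [-> yc]]].
rewrite (walk_word_rcons _ _ yc); have /suffixP [s ->] := IH xp.
case: (last x p) (size_last_path xp size_x) => [|a z] size_z /=.
  by move: N_gt0; rewrite -size_z.
by rewrite rcons_cat rcons_cons -cat1s catA suffix_suffix.
Qed.

Lemma nocc_walk_word u x p : path e x p -> size x = N -> size u <= N ->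
  nocc u (walk_word x p) = nocc u x + \sum_(v <- p) suffix u v.
Proof.
move=> + size_x size_u; elim/last_ind: p => [|p y IH].
  by rewrite /walk_word cats0 big_nil addn0.
move=> xpy; have /suffix_last_walk_word := xpy; rewrite last_rcons => /(_ size_x).
move: xpy; rewrite rcons_path => /andP [xp xy].
have [c [_ yc]] := db_edgeE xy; have [_ /eqP size_y _] := and3P xy.
rewrite (walk_word_rcons _ _ yc) => y_suffix.
by rewrite nocc_rcons (suffix_suffix_size y_suffix) ?size_y // IH // big_rcons addnA.
Qed.

Lemma size_walk_word x p : path e x p -> size x = N -> size (walk_word x p) = N + size p.
Proof.
move=> + size_x; elim/last_ind: p => [|p y IH]; first by rewrite /walk_word cats0 addn0.
rewrite rcons_path => /andP [xp /db_edgeE [c [_ yc]]].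
by rewrite (walk_word_rcons _ _ yc) !size_rcons IH // addnS.
Qed.

Lemma walk_of_word w : N <= size w ->
  exists p, path e (take N w) p /\ walk_word (take N w) p = w.
Proof.
elim/last_ind: w => [|w b IH]; first by rewrite leqn0 => /eqP N0; move: N_gt0; rewrite N0.
rewrite size_rcons leq_eqVlt ltnS => /orP [/eqP N_eq|le_Nw].
  by exists [::]; rewrite /walk_word cats0 take_oversize // size_rcons N_eq.
have [p [xp word_p]] := IH le_Nw.
have size_x : size (take N w) = N by rewrite size_takel.
set z := last (take N w) p; have size_z : size z = N := size_last_path xp size_x.
have take_wb : take N (rcons w b) = take N w by rewrite -cats1 takel_cat.
have size_bz : size (behead z) = N.-1 by rewrite size_behead size_z.
exists (rcons p (rcons (behead z) b)); rewrite take_wb rcons_path xp; split.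
  rewrite /db_edge -/z size_z size_rcons size_bz prednK // -cats1 (take_size_cat _ size_bz).
  by rewrite /= !eqxx.
by rewrite (@walk_word_rcons _ _ _ b) ?word_p // -cats1 (drop_size_cat _ size_bz).
Qed.

End WalkWords.

Section Decomposition.
Variables (A : finType) (N : nat).
Local Notation V := (seq A).
Local Notation e := (@db_edge A N).
Implicit Types (x y : V) (p pr pi : seq V) (g : seq V) (G : seq (seq V)).

Definition db_cycle g :=
  exists c r, [/\ g = c :: r, path e c r, last c r = c, r != [::] & uniq r].

(* Each cycle starts on the path or on a cycle found later, so the cycles can
   be spliced back into the path from last to first. *)
Fixpoint anchored pi G : bool :=
  if G is g :: G' then
    ((head [::] g \in pi) || has (fun g' => head [::] g \in g') G') && anchored pi G'
  else true.

Lemma anchored_sub pi (pi' : seq V) G :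
  {subset pi <= pi'} -> anchored pi G -> anchored pi' G.
Proof.
move=> sub_pi; elim: G => //= g G IH /andP [/orP [g_pi|g_G] /IH ->].
  by rewrite sub_pi.
by rewrite g_G orbT.
Qed.

Lemma anchored_rcons pi (pi' : seq V) G g :
  (forall v, v \in pi -> (v \in pi') || (v \in g)) -> head [::] g \in pi' ->
  anchored pi G -> anchored pi' (rcons G g).
Proof.
move=> sub_pi g_pi'; elim: G => /= [|h G IH]; first by rewrite g_pi'.
case/andP=> /orP [/sub_pi /orP [h_pi'|h_g]|h_G] /IH ->; rewrite ?has_rcons ?h_pi' //.
  by rewrite h_g orbT.
by rewrite h_G !orbT.
Qed.

Record decomposes x p pr G : Prop := Decomposes {
  dec_path : path e x pr;
  dec_uniq : uniq (x :: pr);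
  dec_last : last x pr = last x p;
  dec_cycles : forall g, g \in G -> db_cycle g;
  dec_sum : forall f : V -> nat, \sum_(v <- p) f v =
    \sum_(v <- pr) f v + \sum_(g <- G) \sum_(v <- behead g) f v;
  dec_anchored : anchored (x :: pr) G }.

Lemma decomposes_rcons_fresh x p pr G y :
  decomposes x p pr G -> e (last x p) y -> y \notin x :: pr ->
  decomposes x (rcons p y) (rcons pr y) G.
Proof.
case=> x_pr uniq_pr last_pr cycles sum_p anch xy y_fresh; split=> //.
- by rewrite rcons_path x_pr last_pr.
- by rewrite -rcons_cons rcons_uniq y_fresh.
- by rewrite !last_rcons.
- by move=> f; rewrite !big_rcons sum_p addnAC.
- by apply: anchored_sub anch => v; rewrite -rcons_cons mem_rcons inE orbC => ->.
Qed.

Lemma dec_step_close x pr1 pr2 G y : uniq (x :: pr1 ++ pr2) -> last x pr1 = y ->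
  dec_step (x :: pr1 ++ pr2, G) y = (x :: pr1, rcons G (y :: rcons pr2 y)).
Proof.
move=> uniq_pr last_y; rewrite -cat_cons lastI last_y in uniq_pr *.
have y_new : y \notin belast x pr1.
  by move: uniq_pr; rewrite cat_uniq rcons_uniq => /andP [/andP []].
rewrite /dec_step cat_rcons mem_cat mem_head orbT index_pivot // drop_size_cat //.
by rewrite -cat_rcons (take_size_cat _ (size_rcons _ _)).
Qed.

Lemma decomposes_rcons_close x p pr1 pr2 G y :
  decomposes x p (pr1 ++ pr2) G -> e (last x p) y -> last x pr1 = y ->
  decomposes x (rcons p y) pr1 (rcons G (y :: rcons pr2 y)).
Proof.
case=> + uniq_pr + cycles sum_p anch xy last_y.
rewrite cat_path last_cat last_y => /andP [x_pr1 y_path] last_pr2.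
rewrite -cat_cons in uniq_pr.
have y_pr1 : y \in x :: pr1 by rewrite -last_y mem_last.
have y_fresh : y \notin pr2.
  move: (uniq_pr); rewrite cat_uniq => /and3P [_ /hasPn disjoint _].
  by apply/negP => /disjoint; rewrite /= y_pr1.
split=> //.
- exact: subseq_uniq (prefix_subseq _ _) uniq_pr.
- by rewrite last_rcons.
- move=> g; rewrite mem_rcons inE => /orP [/eqP ->|/cycles //].
  exists y, (rcons pr2 y); split=> //.
  - by rewrite rcons_path y_path last_pr2.
  - by rewrite last_rcons.
  - by rewrite -size_eq0 size_rcons.
  - by rewrite rcons_uniq y_fresh (subseq_uniq (suffix_subseq _ _) uniq_pr).
- by move=> f; rewrite !big_rcons sum_p big_cat /=; lia.
- apply: anchored_rcons anch => //= v.
  by rewrite -cat_cons mem_cat => /orP [->|v_pr2] //; rewrite !inE mem_rcons inE v_pr2 !orbT.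
Qed.

Lemma dec_decomposes x p : path e x p ->
  exists pr G, dec (x :: p) = (x :: pr, G) /\ decomposes x p pr G.
Proof.
elim/last_ind: p => [|p y IH].
  by exists [::], [::]; split=> //; split=> // f; rewrite !big_nil.
rewrite rcons_path => /andP [/IH [pr [G [dec_p dec_pr]]] xy].
rewrite /dec foldl_rcons -/(dec (x :: p)) dec_p.
have [y_pr|y_fresh] := boolP (y \in x :: pr).
  case/splitPl: y_pr dec_pr => pr1 pr2 last_y dec_pr.
  rewrite dec_step_close ?(dec_uniq dec_pr) //.
  by exists pr1, (rcons G (y :: rcons pr2 y)); split=> //; apply: decomposes_rcons_close.
rewrite /dec_step (negPf y_fresh).
by exists (rcons pr y), G; split=> //; apply: decomposes_rcons_fresh.
Qed.

Definition iter_loop m r : seq V := flatten (nseq m r).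

Lemma iter_loop_path m c r : path e c r -> last c r = c ->
  path e c (iter_loop m r) /\ last c (iter_loop m r) = c.
Proof.
move=> c_r last_r; elim: m => [|m [IH1 IH2]] //=.
by rewrite /iter_loop /= cat_path last_cat last_r c_r IH1.
Qed.

Lemma big_iter_loop (f : V -> nat) m r :
  \sum_(v <- iter_loop m r) f v = m * \sum_(v <- r) f v.
Proof.
by elim: m => [|m IH]; rewrite /iter_loop /= ?big_nil // big_cat -/(iter_loop _ _) IH.
Qed.

Lemma mem_iter_loop m r v : 0 < m -> v \in r -> v \in iter_loop m r.
Proof. by case: m => // m _ v_r; rewrite /iter_loop /= mem_cat v_r. Qed.

Lemma splice_loop a L c r m : c \in a :: L -> path e a L -> path e c r -> last c r = c ->
  exists L', [/\ path e a L',
    forall f : V -> nat, \sum_(v <- L') f v = \sum_(v <- L) f v + m * \sum_(v <- r) f v,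
    {subset L <= L'} & 0 < m -> {subset r <= L'}].
Proof.
move=> c_L a_L c_r last_r; have [c_rm last_rm] := iter_loop_path m c_r last_r.
rewrite inE in c_L; case/orP: c_L => [/eqP c_a|].
  exists (iter_loop m r ++ L); split.
  - by rewrite cat_path -c_a c_rm last_rm c_a a_L.
  - by move=> f; rewrite big_cat big_iter_loop addnC.
  - by move=> v v_L; rewrite mem_cat v_L orbT.
  - by move=> m_gt0 v v_r; rewrite mem_cat mem_iter_loop.
move=> c_L; case/splitPr: c_L a_L => L1 L2 a_L.
exists (L1 ++ c :: iter_loop m r ++ L2); split.
- move: a_L; rewrite !cat_path /= => /and3P [-> -> c_L2].
  by rewrite cat_path c_rm last_rm c_L2.
- by move=> f; rewrite !big_cat !big_cons big_cat big_iter_loop /=; lia.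
- by move=> v; rewrite !mem_cat !inE mem_cat => /or3P [] ->; rewrite ?orbT.
- by move=> m_gt0 v v_r; rewrite mem_cat inE mem_cat mem_iter_loop ?orbT.
Qed.

Lemma splice_cycles a L H (m : seq V -> nat) :
  anchored (a :: L) H -> (forall g, g \in H -> db_cycle g) ->
  (forall g, g \in H -> 0 < m g) -> path e a L ->
  exists L', [/\ path e a L',
    forall f : V -> nat, \sum_(v <- L') f v =
      \sum_(v <- L) f v + \sum_(g <- undup H) m g * \sum_(v <- behead g) f v,
    {subset L <= L'} & forall g, g \in H -> {subset g <= a :: L'}].
Proof.
move=> + cycles m_gt0 a_L; elim: H cycles m_gt0 => [|g H IH] cycles m_gt0 /=.
  by move=> _; exists L; split=> // f; rewrite big_nil addn0.
case/andP=> g_anchored H_anchored.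
have sub_H : {subset H <= g :: H} by move=> z z_H; rewrite inE z_H orbT.
have [L1 [a_L1 sum_L1 sub_L1 cover_L1]] :=
  IH (fun g' g'_H => cycles g' (sub_H _ g'_H)) (fun g' g'_H => m_gt0 g' (sub_H _ g'_H))
     H_anchored.
case: ifP => g_H.
  by exists L1; split=> // g'; rewrite inE => /orP [/eqP ->|]; apply: cover_L1.
have [c [r [g_cr c_r last_r _ _]]] := cycles g (mem_head _ _).
have c_L1 : c \in a :: L1.
  case/orP: g_anchored; rewrite g_cr /=.
    by rewrite !inE => /orP [->|/sub_L1 ->]; rewrite ?orbT.
  by case/hasP=> g' g'_H c_g'; apply: cover_L1 g'_H c c_g'.
have [L' [a_L' sum_L' sub_L' cover_r]] := splice_loop (m g) c_L1 a_L1 c_r last_r.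
exists L'; split=> //.
- by move=> f; rewrite sum_L' sum_L1 big_cons g_cr /= -addnA [m (c :: r) * _ + _]addnC.
- by move=> v /sub_L1 /sub_L'.
move=> g'; rewrite inE => /orP [/eqP ->|g'_H] v.
  rewrite g_cr inE => /orP [/eqP ->|v_r].
    by move: c_L1; rewrite !inE => /orP [->|/sub_L' ->]; rewrite ?orbT.
  by rewrite inE cover_r ?orbT // m_gt0 ?mem_head.
by move/(cover_L1 _ g'_H); rewrite !inE => /orP [->|/sub_L' ->]; rewrite ?orbT.
Qed.

Lemma decomposes_pump x p pr G (m : seq V -> nat) :
  decomposes x p pr G -> (forall g, g \in G -> 0 < m g) ->
  exists L, path e x L /\ forall f : V -> nat, \sum_(v <- L) f v =
    \sum_(v <- pr) f v + \sum_(g <- undup G) m g * \sum_(v <- behead g) f v.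
Proof.
case=> x_pr _ _ cycles _ anch m_gt0.
have [L [x_L sum_L _ _]] := splice_cycles anch cycles m_gt0 x_pr.
by exists L.
Qed.

Lemma path_db_size x p : path e x p -> {in p, forall v, size v = N}.
Proof.
elim: p x => //= y p IH x /andP [/and3P [_ /eqP size_y _] y_p] v.
by rewrite inE => /orP [/eqP ->|/(IH _ y_p)].
Qed.

Lemma db_cycle_size g : db_cycle g -> {in g, forall v, size v = N}.
Proof.
case=> c [[|a r] [-> c_r last_r // _ _]] v.
rewrite in_cons => /orP [/eqP ->|/(path_db_size c_r) //].
by rewrite -last_r (path_db_size c_r) //; exact: (mem_last a r).
Qed.

Definition trace_universe : seq (seq V) :=
  bounded_seqs (bounded_seqs (enum A) N) (size (bounded_seqs (enum A) N)).+1.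

Lemma mem_trace_universe s :
  {in s, forall v, size v = N} -> uniq (behead s) -> s \in trace_universe.
Proof.
move=> size_s uniq_s.
have vertices_s : {subset s <= bounded_seqs (enum A) N}.
  by move=> v v_s; rewrite mem_bounded_words // size_s.
apply: mem_bounded_seqs => //; case: s size_s uniq_s vertices_s => //= v s _ uniq_s sub_s.
by rewrite ltnS uniq_leq_size // => z z_s; apply: sub_s; rewrite inE z_s orbT.
Qed.

Lemma decomposes_sum_count x p pr G gs : decomposes x p pr G -> uniq gs -> gs =i G ->
  forall f : V -> nat, \sum_(v <- p) f v =
    \sum_(v <- pr) f v + \sum_(g <- gs) count_mem g G * \sum_(v <- behead g) f v.
Proof.
move=> dec_p uniq_gs gsG f; rewrite (dec_sum dec_p) (sum_count_undup G).
congr (_ + _); apply/perm_big/uniq_perm; rewrite ?undup_uniq // => z.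
by rewrite mem_undup gsG.
Qed.

End Decomposition.

Section Coordinates.
Variables (A : finType) (ws : seq (seq A)).
Local Notation k := (size ws).

Definition nsuff (u : seq A) (om : seq (seq A)) : nat :=
  \sum_(v <- behead om) suffix u v.

Lemma size_occ_walk om : size (occ_walk om ws) = k.
Proof. by rewrite size_vsum //; apply/allP => v /mapP [y _ ->]; rewrite size_map. Qed.

Lemma nth_occ_walk om t : t < k -> nth 0 (occ_walk om ws) t = nsuff (nth [::] ws t) om.
Proof.
move=> lt_t; rewrite nth_vsum //; last by apply/allP => v /mapP [y _ ->]; rewrite size_map.
by rewrite big_map; apply: eq_bigr => v _; rewrite (nth_map [::]).
Qed.

Definition cycle_sum (cs : seq nat) (gs : seq (seq (seq A))) : seq nat :=
  vsum k [seq vscale q.1 (occ_walk q.2 ws) | q <- zip cs gs].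

Lemma size_cycle_sum cs gs : size (cycle_sum cs gs) = k.
Proof.
by rewrite size_vsum //; apply/allP => v /mapP [y _ ->]; rewrite size_vscale size_occ_walk.
Qed.

Lemma nth_cycle_sum cs gs t : t < k ->
  nth 0 (cycle_sum cs gs) t = \sum_(q <- zip cs gs) q.1 * nsuff (nth [::] ws t) q.2.
Proof.
move=> lt_t; rewrite nth_vsum //; last first.
  by apply/allP => v /mapP [y _ ->]; rewrite size_vscale size_occ_walk.
by rewrite big_map; apply: eq_bigr => q _; rewrite nth_vscale nth_occ_walk.
Qed.

Definition balance (pi : seq (seq A)) cs gs : seq nat :=
  vadd (vadd (occ_word (head [::] pi) ws) (occ_walk pi ws)) (cycle_sum cs gs).

Lemma size_balance pi cs gs : size (balance pi cs gs) = k.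
Proof. by rewrite !size_vadd size_map size_occ_walk size_cycle_sum !minnn. Qed.

Lemma nth_balance x pr cs gs t : t < k ->
  let u := nth [::] ws t in
  nth 0 (balance (x :: pr) cs gs) t =
  nocc u x + \sum_(v <- pr) suffix u v + \sum_(q <- zip cs gs) q.1 * nsuff u q.2.
Proof.
move=> lt_t; rewrite nth_vadd ?size_vadd ?size_map ?size_occ_walk ?size_cycle_sum ?minnn //.
by rewrite nth_vadd ?size_map ?size_occ_walk // (nth_map [::]) // nth_occ_walk // nth_cycle_sum.
Qed.

Lemma vdiff_eq0_coords v (F : seq A -> nat) : size v = k ->
  (forall t, t < k -> nth 0 v t = F (nth [::] ws t)) ->
  vdiff v = 0 <-> {in ws &, forall u u', F u = F u'}.
Proof.
move=> size_v vF; split=> [/eqP/vdiff0P eq_v u u' u_ws u'_ws | eqF].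
  rewrite -(nth_index [::] u_ws) -(nth_index [::] u'_ws) -!vF ?index_mem //.
  by apply: eq_v; rewrite size_v index_mem.
apply/eqP/vdiff0P => t t'; rewrite size_v => lt_t lt_t'.
by rewrite !vF //; apply: eqF; apply: mem_nth.
Qed.

End Coordinates.

Section Pumping.
Variables (A : finType) (ws : seq (seq A)) (N : nat).
Hypotheses (N_gt0 : 0 < N) (size_ws : {in ws, forall u, size u <= N}).

Lemma pumped_wmix_words x p pr G xs ys :
  size x = N -> decomposes N x p pr G ->
  size xs = size (undup G) -> all (fun x => 1 <= x) xs ->
  vdiff (balance ws (x :: pr) xs (undup G)) = 0 ->
  size ys = size (undup G) -> has (fun y => 0 < y) ys ->
  vdiff (cycle_sum ws ys (undup G)) = 0 ->
  forall n, exists w, in_wmix ws w /\ n < size w.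
Proof.
move=> size_x dec_p size_xs xs_gt0 bal0 size_ys ys_pos pump0 n.
set gs := undup G in size_xs size_ys bal0 pump0.
have uniq_gs : uniq gs := undup_uniq G.
pose cx g := nth 0 xs (index g gs); pose cy g := nth 0 ys (index g gs).
pose bal u := nocc u x + \sum_(v <- pr) suffix u v + \sum_(g <- gs) cx g * nsuff u g.
pose pump u := \sum_(g <- gs) cy g * nsuff u g.
have bal_ws : {in ws &, forall u u', bal u = bal u'}.
  apply: (vdiff_eq0_coords (F := bal) (size_balance ws (x :: pr) xs gs) _).1 bal0.
  by move=> t lt_t; rewrite nth_balance // big_zip_index.
have pump_ws : {in ws &, forall u u', pump u = pump u'}.
  apply: (vdiff_eq0_coords (F := pump) (size_cycle_sum ws ys gs) _).1 pump0.
  by move=> t lt_t; rewrite nth_cycle_sum // big_zip_index.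
have [g0 g0_G cy_g0] : exists2 g0, g0 \in G & 0 < cy g0.
  case/(has_nthP 0): ys_pos => i lt_i ys_i.
  have lt_i' : i < size gs by rewrite -size_ys.
  exists (nth [::] gs i); first by rewrite -mem_undup mem_nth.
  by rewrite /cy index_uniq.
have m_gt0 g : g \in G -> 0 < cx g + n * cy g.
  move=> g_G; apply: leq_trans (leq_addr _ _); apply: (allP xs_gt0).
  by rewrite mem_nth // size_xs index_mem mem_undup.
have [L [x_L sum_L]] := decomposes_pump dec_p m_gt0.
exists (walk_word N x L); split.
  have nocc_L u : u \in ws -> nocc u (walk_word N x L) = bal u + n * pump u.
    move=> u_ws; rewrite nocc_walk_word ?size_ws // sum_L /bal /pump big_distrr.
    rewrite addnA -[RHS]addnA -big_split; congr (_ + _); apply: eq_bigr => g _.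
    by rewrite mulnDl -mulnA.
  by move=> u u' u_ws u'_ws; rewrite !nocc_L // (bal_ws u u') // (pump_ws u u').
have [c [r [g0_cr _ _ r_nil _]]] := dec_cycles dec_p g0_G.
have long_L : (cx g0 + n * cy g0) * size (behead g0) <= size L.
  rewrite -(sum1_size L); move: (sum_L (fun _ => 1)) => /= ->.
  apply: leq_trans (leq_addl _ _).
  by rewrite (bigD1_seq g0) ?mem_undup ?undup_uniq //= sum1_size leq_addr.
rewrite size_walk_word // -add1n leq_add //; apply: leq_trans long_L.
rewrite mulnDl; apply: leq_trans (leq_addl _ _).
by rewrite -mulnA leq_pmulr // muln_gt0 cy_g0 g0_cr lt0n size_eq0.
Qed.

End Pumping.

Section Witnesses.
Variables (A : finType) (ws : seq (seq A)) (N : nat).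
Hypotheses (N_gt0 : 0 < N) (size_ws : {in ws, forall u, size u <= N}).
Local Notation V := (seq A).
Local Notation e := (@db_edge A N).

Lemma trace_of_comparable_decompositions x p p' pr G G' :
  size x = N -> path e x p -> path e x p' ->
  decomposes N x p pr G -> decomposes N x p' pr G' ->
  {subset G' <= G} -> (forall g, count_mem g G <= count_mem g G') ->
  in_wmix ws (walk_word N x p) -> in_wmix ws (walk_word N x p') -> size p < size p' ->
  (exists xs, [/\ size xs = size (undup G), all (fun x => 1 <= x) xs &
     vdiff (balance ws (x :: pr) xs (undup G)) = 0]) /\
  (exists ys, [/\ size ys = size (undup G), has (fun y => 0 < y) ys &
     vdiff (cycle_sum ws ys (undup G)) = 0]).
Proof.
move=> size_x x_p x_p' dec_p dec_p' sub_G'G count_GG' wmix_p wmix_p' lt_pp'.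
set gs := undup G; have uniq_gs : uniq gs := undup_uniq G.
have gs_G : gs =i G := mem_undup G.
have gs_G' : gs =i G'.
  move=> g; rewrite gs_G; apply/idP/idP => [|/sub_G'G //].
  by rewrite -!has_pred1 !has_count => /leq_trans; apply.
pose c g := count_mem g G; pose c' g := count_mem g G'.
have sum_p := decomposes_sum_count dec_p uniq_gs gs_G.
have sum_p' f : \sum_(v <- p') f v =
    \sum_(v <- p) f v + \sum_(g <- gs) (c' g - c g) * \sum_(v <- behead g) f v.
  rewrite (decomposes_sum_count dec_p' uniq_gs gs_G') sum_p -addnA -big_split.
  by congr (_ + _); apply: eq_bigr => g _ /=; rewrite /c /c' -mulnDl subnKC.
have nocc_p u : u \in ws -> nocc u (walk_word N x p) = nocc u x + \sum_(v <- p) suffix u v.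
  by move=> u_ws; rewrite nocc_walk_word ?size_ws.
have nocc_p' u : u \in ws -> nocc u (walk_word N x p') = nocc u x + \sum_(v <- p') suffix u v.
  by move=> u_ws; rewrite nocc_walk_word ?size_ws.
split.
  exists [seq c g | g <- gs]; split; first exact: size_map.
    by rewrite all_map; apply/allP => g g_gs /=; rewrite -has_count has_pred1 -gs_G.
  apply/(vdiff_eq0_coords (F := fun u => nocc u (walk_word N x p)) (size_balance _ _ _ _)).
    by move=> t lt_t; rewrite nth_balance // big_zip_map nocc_p ?mem_nth // sum_p addnA.
  exact: wmix_p.
exists [seq c' g - c g | g <- gs]; split; first exact: size_map.
  apply: contraLR lt_pp'; rewrite has_map -leqNgt => /hasPn no_pos.
  rewrite -!sum1_size sum_p' [X in _ + X]big1_seq ?addn0 // => g /andP [_ g_gs].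
  by have := no_pos g g_gs; rewrite /= lt0n negbK => /eqP ->.
apply/(vdiff_eq0_coords (F := fun u => nocc u (walk_word N x p') - nocc u (walk_word N x p))
  (size_cycle_sum _ _ _)).
  move=> t lt_t; rewrite nth_cycle_sum // big_zip_map nocc_p ?nocc_p' ?mem_nth //.
  by rewrite sum_p' addnA addKn.
by move=> u u' u_ws u'_ws /=; rewrite (wmix_p u u') // (wmix_p' u u').
Qed.

Lemma trace_of_long_wmix_words :
  (forall n, exists w, in_wmix ws w /\ n < size w) ->
  exists x p pr G, [/\ size x = N, path e x p, dec (x :: p) = (x :: pr, G),
    exists xs, [/\ size xs = size (undup G), all (fun x => 1 <= x) xs &
      vdiff (balance ws (x :: pr) xs (undup G)) = 0] &
    exists ys, [/\ size ys = size (undup G), has (fun y => 0 < y) ys &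
      vdiff (cycle_sum ws ys (undup G)) = 0]].
Proof.
move=> /(increasing_words N) [s sP].
have /functional_choice [P PP] : forall k,
    exists p, path e (take N (s k)) p /\ walk_word N (take N (s k)) p = s k.
  by move=> k; apply: (walk_of_word N_gt0); have [_ /ltnW] := sP k.
pose X k := take N (s k).
have size_X k : size (X k) = N by rewrite size_takel //; have [_ /ltnW] := sP k.
have /functional_choice [D DP] : forall k, exists D : seq V * seq (seq V),
    dec (X k :: P k) = (X k :: D.1, D.2) /\ decomposes N (X k) (P k) D.1 D.2.
  by move=> k; have [pr [G []]] := dec_decomposes (PP k).1; exists (pr, G).
have [|i [j [lt_ij /= [X_ji pr_ji] G_ji count_ij]]] :=
  @dickson_multisets _ (trace_universe A N) (fun k => (X k :: (D k).1, (D k).2)).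
  move=> k; have [_ dec_k] := DP k; split=> /=.
    apply: mem_trace_universe; last by have /andP [] := dec_uniq dec_k.
    move=> v; rewrite in_cons => /orP [/eqP ->|]; first exact: size_X.
    exact/(path_db_size (dec_path dec_k)).
  move=> g /(dec_cycles dec_k) cyc_g; apply: mem_trace_universe (db_cycle_size cyc_g) _.
  by case: cyc_g => c [r [-> _ _ _]].
have [dec_i decomp_i] := DP i; have [_ decomp_j] := DP j.
rewrite X_ji pr_ji in decomp_j.
have word_P k : walk_word N (X k) (P k) = s k := (PP k).2.
have size_P k : size (s k) = N + size (P k).
  by rewrite -word_P size_walk_word // (PP k).1.
have x_Pj : path e (X i) (P j) by rewrite -X_ji; exact: (PP j).1.
have lt_Pij : size (P i) < size (P j).
  have incr k : size (s k) < size (s k.+1) by have [] := sP k.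
  by rewrite -(ltn_add2l N) -!size_P; apply: (homo_ltn (@ltn_trans) incr).
have wmix k : in_wmix ws (walk_word N (X k) (P k)) by rewrite word_P; case: (sP k).
have wmix_j : in_wmix ws (walk_word N (X i) (P j)) by rewrite -X_ji; apply: wmix.
have [bal pump] := trace_of_comparable_decompositions (size_X i) (PP i).1 x_Pj
  decomp_i decomp_j G_ji count_ij (wmix i) wmix_j lt_Pij.
exists (X i), (P i), (D i).1, (D i).2; split=> //; exact: (PP i).1.
Qed.

End Witnesses.

Theorem theorem1 (A : finType) (ws : seq (seq A)) :
  let N := \max_(w <- ws) size w in
  1 <= N ->
  (~ (exists L : seq (seq A), forall w, in_wmix ws w -> w \in L))
  <->
  (exists om : seq (seq A),
     db_walk N om /\
     let pi := (dec om).1 in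
     let gs := undup (dec om).2 in
     (exists xs : seq nat,
        size xs = size gs /\ all (fun x => 1 <= x) xs /\
        vdiff (vadd (vadd (occ_word (head [::] pi) ws) (occ_walk pi ws))
                    (vsum (size ws) [seq vscale p.1 (occ_walk p.2 ws) | p <- zip xs gs]))
        = 0) /\
     (exists ys : seq nat,
        size ys = size gs /\ has (fun y => 0 < y) ys /\
        vdiff (vsum (size ws) [seq vscale p.1 (occ_walk p.2 ws) | p <- zip ys gs]) = 0)).
Proof.
move=> N N_gt0; have size_ws : {in ws, forall u, size u <= N}.
  by move=> u u_ws; apply: leq_bigmax_seq.
split=> [/infinite_wordsP long | [[|x p] [// /andP [/eqP size_x x_p]]]].
  have [x [p [pr [G [size_x x_p dec_p balance_xs pump_ys]]]]] :=
    trace_of_long_wmix_words N_gt0 size_ws long.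
  exists (x :: p); split; first by apply/andP; split; [apply/eqP|].
  rewrite dec_p; split.
    by have [xs [size_xs xs_gt0 bal]] := balance_xs; exists xs.
  by have [ys [size_ys ys_pos pump]] := pump_ys; exists ys.
have [pr [G [dec_p dec_pr]]] := dec_decomposes x_p.
rewrite dec_p => -[[xs [size_xs [xs_gt0 bal]]] [ys [size_ys [ys_pos pump]]]].
apply/infinite_wordsP.
exact: (pumped_wmix_words N_gt0 size_ws size_x dec_pr
  size_xs xs_gt0 bal size_ys ys_pos pump).
Qed.
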